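(* Assume the standing assumptions, suppose $(D)$ has an optimal solution $p^*$ (a minimizer of $\theta$) with $\|p^*\|\le R$ for some $R>0$, assume $D_f>0$, let $\epsilon>0$, $\rho=\frac{\epsilon}{3D_f}$, $\kappa=\frac{2\epsilon}{3R^2}$, and let $(p_k)_{k\ge0}$ be generated by the fast gradient method applied to $\theta_{\rho,\kappa}$. Then for all $k\ge0$, $$\|\nabla\theta_\rho(p_k)\|=\|Ax_{f,p_k}-x_{g,p_k}\|\le 2\sqrt{L(\rho,\kappa)\Bigl(\theta(0)-\theta(p^* )+\frac\epsilon3\Bigr)}\,e^{-\frac k2\sqrt{\kappa/L(\rho,\kappa)}}+\frac{4\sqrt2\,\epsilon}{3R}.$$
   Context: Standing assumptions: $\mathcal{H}$ is a real Hilbert space; $f:\mathcal{H}\to\mathbb{R}\cup\{+\infty\}$ is proper, convex, lower semicontinuous with bounded effective domain; $g:\mathbb{R}^m\to\mathbb{R}\cup\{+\infty\}$ is proper, lower semicontinuous and $\mu$-strongly convex for some $\mu>0$; $A:\mathcal{H}\to\mathbb{R}^m$ is linear and continuous with $A(\operatorname{dom} f)\cap\operatorname{dom} g\neq\emptyset$. $(D)$ is $\sup_{p}\{-f^*(A^*p)-g^*(-p)\}$. $D_f:=\sup\{\tfrac12\|x\|^2:x\in\operatorname{dom} f\}$. $\theta(p):=f^*(A^*p)+g^*(-p)$. For $\rho>0$, $f_\rho^*(q):=\sup_{x\in\mathcal{H}}\{\langle q,x\rangle-f(x)-\frac\rho2\|x\|^2\}$; $x_{f,p}$ is the unique maximizer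 in the definition of $f_\rho^*(A^*p)$; $x_{g,p}:=\nabla g^*(-p)$, the unique minimizer of $x\mapsto\langle p,x\rangle+g(x)$ on $\mathbb{R}^m$. $\theta_\rho(p):=f_\rho^*(A^*p)+g^*(-p)$, whose gradient is $Ax_{f,p}-x_{g,p}$; $\theta_{\rho,\kappa}(p):=\theta_\rho(p)+\frac\kappa2\|p\|^2$; $L(\rho,\kappa):=\frac{\|A\|^2}{\rho}+\frac1\mu+\kappa$. The fast gradient method applied to $\theta_{\rho,\kappa}$ is: $w_0=p_0=0$ and for $k\ge0$, $p_{k+1}=w_k-\frac{1}{L(\rho,\kappa)}\nabla\theta_{\rho,\kappa}(w_k)$, $w_{k+1}=p_{k+1}+\frac{\sqrt{L(\rho,\kappa)}-\sqrt\kappa}{\sqrt{L(\rho,\kappa)}+\sqrt\kappa}(p_{k+1}-p_k)$. *)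

From Stdlib Require Import Reals Lra ClassicalEpsilon FunctionalExtensionality.
From Stdlib Require Fin.
Open Scope R_scope.

(* ---------- Extended reals (-oo excluded): None = +oo ---------- *)
Definition ext := option R.

Definition ext_le (a b : ext) : Prop :=
  match a, b with
  | _, None => True
  | None, Some _ => False
  | Some x, Some y => x <= y
  end.

Definition ext_lt_real (r : R) (b : ext) : Prop :=
  match b with None => True | Some y => r < y end.

Definition ext_add (a b : ext) : ext :=
  match a, b with Some x, Some y => Some (x + y) | _, _ => None end.

(* supremum of a set of reals in (-oo,+oo]; +oo when no least upper bound
   exists (the sets used below are always nonempty) *)
Definition esup (E : R -> Prop) : ext :=
  match excluded_middle_informative (exists l, is_lub E l) with
  | left h => Some (proj1_sig (constructive_indefinite_description _ h))
  | right _ => None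
  end.

Record InnerSpace := {
  carrier :> Type;
  hzero : carrier;
  hadd : carrier -> carrier -> carrier;
  hopp : carrier -> carrier;
  hscal : R -> carrier -> carrier;
  hinner : carrier -> carrier -> R;
  hadd_assoc : forall x y z, hadd x (hadd y z) = hadd (hadd x y) z;
  hadd_comm : forall x y, hadd x y = hadd y x;
  hadd_0 : forall x, hadd hzero x = x;
  hadd_opp : forall x, hadd x (hopp x) = hzero;
  hscal_1 : forall x, hscal 1 x = x;
  hscal_assoc : forall a b x, hscal a (hscal b x) = hscal (a * b) x;
  hscal_distr_r : forall a b x, hscal (a + b) x = hadd (hscal a x) (hscal b x);
  hscal_distr_l : forall a x y, hscal a (hadd x y) = hadd (hscal a x) (hscal a y);
  hinner_sym : forall x y, hinner x y = hinner y x;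
  hinner_add : forall x y z, hinner (hadd x y) z = hinner x z + hinner y z;
  hinner_scal : forall a x y, hinner (hscal a x) y = a * hinner x y;
  hinner_pos : forall x, 0 <= hinner x x;
  hinner_def : forall x, hinner x x = 0 -> x = hzero
}.

Arguments hzero {_}.
Arguments hadd {_} _ _.
Arguments hopp {_} _.
Arguments hscal {_} _ _.
Arguments hinner {_} _ _.

Definition hnorm {H : InnerSpace} (x : H) : R := sqrt (hinner x x).
Definition hsub {H : InnerSpace} (x y : H) : H := hadd x (hopp y).
Definition hdist {H : InnerSpace} (x y : H) : R := hnorm (hsub x y).
Definition hcomb {H : InnerSpace} (t : R) (x y : H) : H :=
  hadd (hscal t x) (hscal (1 - t) y).

Definition complete (H : InnerSpace) : Prop :=
  forall u : nat -> H,
    (forall e, 0 < e -> exists N, forall n k, (n >= N)%nat -> (k >= N)%nat ->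
        hdist (u n) (u k) < e) ->
    exists l : H, forall e, 0 < e -> exists N, forall n, (n >= N)%nat ->
        hdist (u n) l < e.

Definition vec (m : nat) := Fin.t m -> R.

Fixpoint vdot (m : nat) : vec m -> vec m -> R :=
  match m return vec m -> vec m -> R with
  | O => fun _ _ => 0
  | S n => fun x y => x Fin.F1 * y Fin.F1 +
                      vdot n (fun i => x (Fin.FS i)) (fun i => y (Fin.FS i))
  end.

Definition vnorm {m} (x : vec m) : R := sqrt (vdot m x x).
Definition vzero {m} : vec m := fun _ => 0.
Definition vadd {m} (x y : vec m) : vec m := fun i => x i + y i.
Definition vopp {m} (x : vec m) : vec m := fun i => - x i.
Definition vsub {m} (x y : vec m) : vec m := fun i => x i - y i.
Definition vscal {m} (a : R) (x : vec m) : vec m := fun i => a * x i.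
Definition vdist {m} (x y : vec m) : R := vnorm (vsub x y).
Definition vcomb {m} (t : R) (x y : vec m) : vec m :=
  vadd (vscal t x) (vscal (1 - t) y).

Definition dom {X} (f : X -> ext) (x : X) : Prop := f x <> None.

Definition proper {X} (f : X -> ext) : Prop := exists x, dom f x.

Definition convex {X} (comb : R -> X -> X -> X) (f : X -> ext) : Prop :=
  forall x y a b t, f x = Some a -> f y = Some b -> 0 <= t <= 1 ->
    exists c, f (comb t x y) = Some c /\ c <= t * a + (1 - t) * b.

Definition lsc {X} (dist : X -> X -> R) (f : X -> ext) : Prop :=
  forall x r, ext_lt_real r (f x) ->
    exists d, 0 < d /\ forall y, dist x y < d -> ext_lt_real r (f y).

Definition strongly_convex {m} (mu : R) (g : vec m -> ext) : Prop :=
  convex (@vcomb m) (fun x => option_map (fun v => v - mu / 2 * (vnorm x) ^ 2) (g x)).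

Definition bounded_dom {H : InnerSpace} (f : H -> ext) : Prop :=
  exists M, forall x, dom f x -> hnorm x <= M.

Definition linear_map {H : InnerSpace} {m} (A : H -> vec m) : Prop :=
  (forall x y, A (hadd x y) = vadd (A x) (A y)) /\
  (forall a x, A (hscal a x) = vscal a (A x)).

Definition bounded_map {H : InnerSpace} {m} (A : H -> vec m) : Prop :=
  exists C, forall x, vnorm (A x) <= C * hnorm x.

Definition is_opnorm {H : InnerSpace} {m} (A : H -> vec m) (nA : R) : Prop :=
  is_lub (fun r => exists x, hnorm x <= 1 /\ r = vnorm (A x)) nA.

Definition is_Df {H : InnerSpace} (f : H -> ext) (Df : R) : Prop :=
  is_lub (fun r => exists x, dom f x /\ r = / 2 * (hnorm x) ^ 2) Df.

Definition conjH {H : InnerSpace} (f : H -> ext) (q : H) : ext :=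
  esup (fun r => exists x v, f x = Some v /\ r = hinner q x - v).

Definition conjV {m} (g : vec m -> ext) (q : vec m) : ext :=
  esup (fun r => exists x v, g x = Some v /\ r = vdot m q x - v).

Definition theta {H : InnerSpace} {m} (f : H -> ext) (g : vec m -> ext)
  (Astar : vec m -> H) (p : vec m) : ext :=
  ext_add (conjH f (Astar p)) (conjV g (vopp p)).

Definition is_xf {H : InnerSpace} {m} (f : H -> ext) (Astar : vec m -> H)
  (rho : R) (p : vec m) (x0 : H) : Prop :=
  exists v0, f x0 = Some v0 /\
    forall x v, f x = Some v ->
      hinner (Astar p) x - v - rho / 2 * (hnorm x) ^ 2
      <= hinner (Astar p) x0 - v0 - rho / 2 * (hnorm x0) ^ 2.

Definition is_xg {m} (g : vec m -> ext) (p : vec m) (x0 : vec m) : Prop :=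
  exists v0, g x0 = Some v0 /\
    forall x v, g x = Some v -> vdot m p x0 + v0 <= vdot m p x + v.

Definition rho_of (eps Df : R) : R := eps / (3 * Df).
Definition kappa_of (eps Rb : R) : R := 2 * eps / (3 * Rb ^ 2).
Definition Lconst (nA rho mu kappa : R) : R := nA ^ 2 / rho + 1 / mu + kappa.

Fixpoint fgm {m} (grad : vec m -> vec m) (L kappa : R) (k : nat) : vec m * vec m :=
  match k with
  | O => (vzero, vzero)
  | S k' =>
      let (p, w) := fgm grad L kappa k' in
      let p' := vsub w (vscal (1 / L) (grad w)) in
      let beta := (sqrt L - sqrt kappa) / (sqrt L + sqrt kappa) in
      (p', vadd p' (vscal beta (vsub p' p)))
  end.

From Stdlib Require Import Reals Lra Psatz FunctionalExtensionality ClassicalEpsilon.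
Open Scope R_scope.

(** Write [theta_rho(p) = f_rho^*(A^* p) + g^*(-p)]: it is finite everywhere,
    its value is attained at [x_{f,p}] and [x_{g,p}], and
    (1) it is convex with gradient [A x_{f,p} - x_{g,p}], and smooth with
        constant [||A||^2/rho + 1/mu], by quadratic growth of the strongly
        concave/convex inner problems around their optimizers;
    (2) it underestimates [theta] by at most [rho D_f = eps/3].
    Adding [kappa/2 |p|^2] gives a [kappa]-strongly convex, [L(rho,kappa)]-smooth
    function [theta_{rho,kappa}], on which the fast gradient method contracts
    a Lyapunov potential by [1 - sqrt (kappa/L)] per step.  Hence the gap of
    [theta_{rho,kappa}] at [p_k] is at most [(1 - sqrt(kappa/L))^k] times
    [theta 0 - theta pstar + eps/3]; the descent lemma turns this gap into a
    bound on the gradient of [theta_{rho,kappa}], the gap also bounds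
    [kappa |p_k|], and [grad theta_rho (p_k)] is the difference of the two. *)

Lemma vdot_sym m : forall x y : vec m, vdot m x y = vdot m y x.
Proof. induction m; intros x y; simpl; [reflexivity|]. rewrite IHm; ring. Qed.

Lemma vdot_addl m : forall x y z : vec m, vdot m (vadd x y) z = vdot m x z + vdot m y z.
Proof.
  induction m; intros x y z; simpl; [ring|].
  rewrite (IHm (fun i => x (Fin.FS i)) (fun i => y (Fin.FS i))). unfold vadd; ring.
Qed.

Lemma vdot_scall m : forall a (x z : vec m), vdot m (vscal a x) z = a * vdot m x z.
Proof.
  induction m; intros a x z; simpl; [ring|].
  rewrite (IHm a (fun i => x (Fin.FS i))). unfold vscal; ring.
Qed.

Lemma vdot_oppl m (x z : vec m) : vdot m (vopp x) z = - vdot m x z.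
Proof.
  replace (vopp x) with (vscal (-1) x) by (apply functional_extensionality; intro i;
    unfold vopp, vscal; ring).
  rewrite vdot_scall; ring.
Qed.

Lemma vdot_subl m (x y z : vec m) : vdot m (vsub x y) z = vdot m x z - vdot m y z.
Proof.
  replace (vsub x y) with (vadd x (vopp y)) by (apply functional_extensionality; intro i;
    unfold vsub, vadd, vopp; ring).
  rewrite vdot_addl, vdot_oppl; ring.
Qed.

Lemma vdot_zerol m (z : vec m) : vdot m vzero z = 0.
Proof.
  replace vzero with (vscal 0 z) by (apply functional_extensionality; intro i;
    unfold vzero, vscal; ring).
  rewrite vdot_scall; ring.
Qed.

Lemma vdot_addr m (x y z : vec m) : vdot m z (vadd x y) = vdot m z x + vdot m z y.
Proof. rewrite vdot_sym, vdot_addl, (vdot_sym m x), (vdot_sym m y); ring. Qed.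
Lemma vdot_scalr m a (x z : vec m) : vdot m z (vscal a x) = a * vdot m z x.
Proof. rewrite vdot_sym, vdot_scall, vdot_sym; ring. Qed.
Lemma vdot_subr m (x y z : vec m) : vdot m z (vsub x y) = vdot m z x - vdot m z y.
Proof. rewrite vdot_sym, vdot_subl, (vdot_sym m x), (vdot_sym m y); ring. Qed.
Lemma vdot_oppr m (x z : vec m) : vdot m z (vopp x) = - vdot m z x.
Proof. rewrite vdot_sym, vdot_oppl, vdot_sym; ring. Qed.
Lemma vdot_zeror m (z : vec m) : vdot m z vzero = 0.
Proof. rewrite vdot_sym; apply vdot_zerol. Qed.

Ltac vexp := repeat rewrite ?vdot_addl, ?vdot_addr, ?vdot_scall, ?vdot_scalr,
  ?vdot_subl, ?vdot_subr, ?vdot_oppl, ?vdot_oppr, ?vdot_zerol, ?vdot_zeror.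
Ltac vexp_in h := repeat rewrite ?vdot_addl, ?vdot_addr, ?vdot_scall, ?vdot_scalr,
  ?vdot_subl, ?vdot_subr, ?vdot_oppl, ?vdot_oppr, ?vdot_zerol, ?vdot_zeror in h.

Lemma vdot_pos m : forall x : vec m, 0 <= vdot m x x.
Proof. induction m; intros x; simpl; [lra|]. specialize (IHm (fun i => x (Fin.FS i))). nra. Qed.

Lemma vdot_eq0 m : forall x : vec m, vdot m x x = 0 -> x = vzero.
Proof.
  induction m; intros x Hx; apply functional_extensionality; intro i.
  - inversion i.
  - simpl in Hx. pose proof (vdot_pos m (fun i => x (Fin.FS i))).
    assert (head0 : x Fin.F1 = 0) by nra.
    assert (tail0 : vdot m (fun i => x (Fin.FS i)) (fun i => x (Fin.FS i)) = 0) by nra.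
    apply IHm in tail0.
    pattern i; apply Fin.caseS'; [exact head0|].
    intro j. exact (f_equal (fun v => v j) tail0).
Qed.

Lemma vnorm2 m (x : vec m) : vnorm x ^ 2 = vdot m x x.
Proof. unfold vnorm. rewrite pow2_sqrt; [reflexivity| apply vdot_pos]. Qed.

Lemma vnorm_pos m (x : vec m) : 0 <= vnorm x.
Proof. apply sqrt_pos. Qed.

Lemma vnorm_zero m : vnorm (@vzero m) = 0.
Proof. unfold vnorm. rewrite vdot_zerol. apply sqrt_0. Qed.

Lemma vnorm_scal m a (x : vec m) : vnorm (vscal a x) = Rabs a * vnorm x.
Proof.
  unfold vnorm. rewrite vdot_scall, vdot_scalr, <- Rmult_assoc.
  rewrite sqrt_mult_alt by nra. fold (Rsqr a). now rewrite sqrt_Rsqr_abs.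
Qed.

Lemma young m (d a : vec m) c :
  0 < c -> vdot m d a <= c / 2 * vdot m d d + 1 / (2 * c) * vdot m a a.
Proof.
  intros hc. pose proof (vdot_pos m (vsub (vscal c d) a)) as h. vexp_in h.
  rewrite (vdot_sym m a d) in h.
  apply (Rmult_le_reg_l (2 * c)); [lra|].
  replace (2 * c * (c / 2 * vdot m d d + 1 / (2 * c) * vdot m a a))
    with (c * c * vdot m d d + vdot m a a) by (field; lra).
  nra.
Qed.

Lemma cauchy_schwarz m (x y : vec m) : vdot m x y <= vnorm x * vnorm y.
Proof.
  destruct (Req_dec (vdot m x x) 0) as [x0|xnz].
  { apply vdot_eq0 in x0; subst. rewrite vdot_zerol, vnorm_zero.
    pose proof (vnorm_pos m y); nra. }
  destruct (Req_dec (vdot m y y) 0) as [y0|ynz].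
  { apply vdot_eq0 in y0; subst. rewrite vdot_zeror, vnorm_zero.
    pose proof (vnorm_pos m x); nra. }
  pose proof (vdot_pos m x); pose proof (vdot_pos m y).
  assert (nx : 0 < vnorm x) by (apply sqrt_lt_R0; lra).
  assert (ny : 0 < vnorm y) by (apply sqrt_lt_R0; lra).
  pose proof (young m x y (vnorm y / vnorm x) ltac:(apply Rdiv_lt_0_compat; lra)) as h.
  rewrite <- (vnorm2 m x), <- (vnorm2 m y) in h.
  replace (vnorm y / vnorm x / 2 * vnorm x ^ 2 + 1 / (2 * (vnorm y / vnorm x)) * vnorm y ^ 2)
    with (vnorm x * vnorm y) in h by (field; lra).
  exact h.
Qed.

Lemma vnorm_triangle m (x y : vec m) : vnorm (vadd x y) <= vnorm x + vnorm y.
Proof.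
  pose proof (vnorm_pos m x); pose proof (vnorm_pos m y).
  apply Rsqr_incr_0_var; [|lra]. unfold Rsqr.
  replace (vnorm (vadd x y) * vnorm (vadd x y)) with (vnorm (vadd x y) ^ 2) by ring.
  rewrite vnorm2. vexp. rewrite (vdot_sym m y x). pose proof (cauchy_schwarz m x y).
  rewrite <- (vnorm2 m x), <- (vnorm2 m y). nra.
Qed.

Lemma sq_expand m k (p q : vec m) :
  k / 2 * vdot m q q
  = k / 2 * vdot m p p + k * vdot m p (vsub q p) + k / 2 * vdot m (vsub q p) (vsub q p).
Proof. vexp. rewrite (vdot_sym m q p). field. Qed.

Lemma hinner_addr (H : InnerSpace) (x y z : H) : hinner x (hadd y z) = hinner x y + hinner x z.
Proof. rewrite hinner_sym, hinner_add, (hinner_sym _ y), (hinner_sym _ z); ring. Qed.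
Lemma hinner_scalr (H : InnerSpace) a (x y : H) : hinner x (hscal a y) = a * hinner x y.
Proof. rewrite hinner_sym, hinner_scal, hinner_sym; ring. Qed.
Lemma hinner_zerol (H : InnerSpace) (y : H) : hinner hzero y = 0.
Proof. pose proof (hinner_add H hzero hzero y) as e. rewrite hadd_0 in e. lra. Qed.
Lemma hinner_oppl (H : InnerSpace) (x y : H) : hinner (hopp x) y = - hinner x y.
Proof. pose proof (hinner_add H x (hopp x) y) as e. rewrite hadd_opp, hinner_zerol in e. lra. Qed.
Lemma hinner_subl (H : InnerSpace) (x y z : H) : hinner (hsub x y) z = hinner x z - hinner y z.
Proof. unfold hsub. rewrite hinner_add, hinner_oppl; ring. Qed.
Lemma hinner_subr (H : InnerSpace) (x y z : H) : hinner z (hsub x y) = hinner z x - hinner z y.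
Proof. rewrite hinner_sym, hinner_subl, (hinner_sym _ x), (hinner_sym _ y); ring. Qed.

Lemma hnorm2 (H : InnerSpace) (x : H) : hnorm x ^ 2 = hinner x x.
Proof. unfold hnorm. rewrite pow2_sqrt; [reflexivity| apply hinner_pos]. Qed.

Lemma hnorm_scal (H : InnerSpace) a (x : H) : hnorm (hscal a x) = Rabs a * hnorm x.
Proof.
  unfold hnorm. rewrite hinner_scal, hinner_scalr, <- Rmult_assoc.
  rewrite sqrt_mult_alt by nra. fold (Rsqr a). now rewrite sqrt_Rsqr_abs.
Qed.

Lemma hcomb_inner (H : InnerSpace) t (q x y : H) :
  hinner q (hcomb t x y) = t * hinner q x + (1 - t) * hinner q y.
Proof. unfold hcomb. rewrite hinner_addr, !hinner_scalr. ring. Qed.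

Lemma hcomb_norm (H : InnerSpace) t (x y : H) :
  hinner (hcomb t x y) (hcomb t x y)
  = t * hinner x x + (1 - t) * hinner y y - t * (1 - t) * hinner (hsub x y) (hsub x y).
Proof.
  unfold hcomb. rewrite !hinner_add, !hinner_addr, !hinner_scal, !hinner_scalr.
  rewrite !hinner_subl, !hinner_subr, (hinner_sym _ y x). ring.
Qed.

Section LinearMap.
Variables (H : InnerSpace) (m : nat) (A : H -> vec m).
Hypothesis A_lin : linear_map A.

Lemma linear_zero : A hzero = vzero.
Proof.
  destruct A_lin as [Aadd _]. pose proof (Aadd hzero hzero) as e. rewrite hadd_0 in e.
  apply functional_extensionality; intro i.
  pose proof (f_equal (fun v => v i) e) as ei. unfold vadd, vzero in *. simpl in ei. lra.
Qed.

Lemma linear_sub x y : A (hsub x y) = vsub (A x) (A y).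
Proof.
  destruct A_lin as [Aadd _].
  pose proof (Aadd y (hopp y)) as e. rewrite hadd_opp, linear_zero in e.
  unfold hsub. rewrite Aadd. apply functional_extensionality; intro i.
  pose proof (f_equal (fun v => v i) e) as ei. unfold vzero, vadd, vsub in *. lra.
Qed.

Lemma opnorm_bound nA : is_opnorm A nA -> forall z, vnorm (A z) <= nA * hnorm z.
Proof.
  intros [ub _] z.
  destruct (Req_dec (hnorm z) 0) as [z0|znz].
  - assert (zz : hinner z z = 0).
    { unfold hnorm in z0. apply sqrt_eq_0 in z0; [exact z0| apply hinner_pos]. }
    apply hinner_def in zz. subst z.
    rewrite z0, linear_zero, vnorm_zero. lra.
  - assert (npos : 0 < hnorm z) by (pose proof (sqrt_pos (hinner z z)); unfold hnorm in *; lra).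
    assert (unit : vnorm (A (hscal (/ hnorm z) z)) <= nA).
    { apply ub. exists (hscal (/ hnorm z) z). split; [|reflexivity].
      rewrite hnorm_scal, Rabs_right by (left; apply Rinv_0_lt_compat; lra).
      right. field. lra. }
    destruct A_lin as [_ Ascal].
    rewrite Ascal, vnorm_scal, Rabs_right in unit by (left; apply Rinv_0_lt_compat; lra).
    apply (Rmult_le_compat_r (hnorm z)) in unit; [|lra].
    replace (/ hnorm z * vnorm (A z) * hnorm z) with (vnorm (A z)) in unit by (field; lra).
    exact unit.
Qed.

Lemma coupling_bound nA rho : is_opnorm A nA -> 0 < rho ->
  forall d z, vdot m d (A z) <= rho / 2 * hinner z z + nA ^ 2 / (2 * rho) * vdot m d d.
Proof.
  intros HnA hrho d z.
  pose proof (cauchy_schwarz m d (A z)) as cs.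
  pose proof (opnorm_bound nA HnA z) as hb.
  pose proof (vnorm_pos m d). pose proof (sqrt_pos (hinner z z)).
  rewrite <- hnorm2, <- vnorm2.
  assert (amgm : 0 <= (nA * vnorm d - rho * hnorm z) ^ 2) by apply pow2_ge_0.
  assert (vnorm d * vnorm (A z) <= vnorm d * (nA * hnorm z)) by (apply Rmult_le_compat_l; lra).
  apply (Rmult_le_reg_l (2 * rho)); [lra|].
  replace (2 * rho * (rho / 2 * hnorm z ^ 2 + nA ^ 2 / (2 * rho) * vnorm d ^ 2))
    with (rho * rho * hnorm z ^ 2 + nA ^ 2 * vnorm d ^ 2) by (field; lra).
  unfold hnorm in *. nra.
Qed.

End LinearMap.

(** * Quadratic growth around optimizers of strongly concave/convex problems *)

Lemma le_of_scaled_le a b : 0 <= b -> (forall t, 0 < t <= 1 -> (1 - t) * b <= a) -> b <= a.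
Proof.
  intros hb h. destruct (Rle_or_lt b a) as [|hlt]; [assumption|].
  assert (ha : 0 <= a) by (specialize (h 1 ltac:(lra)); lra).
  set (t := (b - a) / (2 * b)).
  assert (ht : 0 < t <= 1).
  { unfold t; split; [apply Rdiv_lt_0_compat; lra|].
    apply (Rmult_le_reg_l (2 * b)); [lra|]. field_simplify; lra. }
  specialize (h t ht).
  replace ((1 - t) * b) with ((a + b) / 2) in h by (unfold t; field; lra). lra.
Qed.

Lemma smoothed_maximizer_growth (H : InnerSpace) (f : H -> ext) (f_convex : convex (@hcomb H) f)
  (q : H) rho (hrho : 0 < rho) x0 v0 :
  f x0 = Some v0 ->
  (forall x v, f x = Some v ->
     hinner q x - v - rho / 2 * hnorm x ^ 2 <= hinner q x0 - v0 - rho / 2 * hnorm x0 ^ 2) ->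
  forall x v, f x = Some v ->
    hinner q x - v - rho / 2 * hinner x x + rho / 2 * hinner (hsub x x0) (hsub x x0)
    <= hinner q x0 - v0 - rho / 2 * hinner x0 x0.
Proof.
  intros hx0 hmax x v hx. rewrite hnorm2 in hmax.
  pose proof (hinner_pos H (hsub x x0)).
  enough (rho / 2 * hinner (hsub x x0) (hsub x x0)
          <= (hinner q x0 - v0 - rho / 2 * hinner x0 x0) - (hinner q x - v - rho / 2 * hinner x x))
    by lra.
  apply le_of_scaled_le; [apply Rmult_le_pos; lra|]. intros t ht.
  destruct (f_convex x x0 v v0 t hx hx0 ltac:(lra)) as [c [hc hcle]].
  specialize (hmax _ _ hc). rewrite hnorm2, hcomb_inner, hcomb_norm in hmax.
  apply (Rmult_le_reg_l t); [lra|]. nra.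
Qed.

Lemma strongly_convex_minimizer_growth m (g : vec m -> ext) mu (hmu : 0 < mu)
  (g_sc : strongly_convex mu g) (p : vec m) y0 w0 :
  g y0 = Some w0 ->
  (forall x v, g x = Some v -> vdot m p y0 + w0 <= vdot m p x + v) ->
  forall x v, g x = Some v ->
    vdot m p y0 + w0 + mu / 2 * vdot m (vsub x y0) (vsub x y0) <= vdot m p x + v.
Proof.
  intros hy0 hmin x v hx.
  pose proof (vdot_pos m (vsub x y0)).
  enough (mu / 2 * vdot m (vsub x y0) (vsub x y0) <= (vdot m p x + v) - (vdot m p y0 + w0))
    by lra.
  apply le_of_scaled_le; [apply Rmult_le_pos; lra|]. intros t ht.
  destruct (g_sc x y0 (v - mu / 2 * vnorm x ^ 2) (w0 - mu / 2 * vnorm y0 ^ 2) t)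
    as [c [hc hcle]]; [rewrite hx; reflexivity| rewrite hy0; reflexivity| lra|].
  destruct (g (vcomb t x y0)) as [gc|] eqn:eg; [|discriminate].
  injection hc as hc. specialize (hmin _ _ eg).
  replace (vnorm (vcomb t x y0) * (vnorm (vcomb t x y0) * 1))
    with (vdot m (vcomb t x y0) (vcomb t x y0)) in hc by (rewrite <- vnorm2; ring).
  rewrite !vnorm2 in hcle. subst c. unfold vcomb in *. vexp_in hcle. vexp_in hmin. vexp.
  rewrite (vdot_sym m y0 x) in *.
  apply (Rmult_le_reg_l t); [lra|]. nra.
Qed.

(** * The fast gradient method on a smooth strongly convex function *)

(** Center of the estimate sequence of the method: [z = ((1 + s) w - p) / s]. *)
Definition fgm_center {m} (s : R) (p w : vec m) : vec m :=
  vscal (1 / s) (vsub (vscal (1 + s) w) p).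

(** Scalar core of one step of the method: the potential contracts by [1 - s],
    given the descent bound at the gradient step [Pq], the strong-convexity
    lower bounds at [u] and at the previous iterate, and [|a - b|^2 >= 0]. *)
Lemma fgm_step_scalar (s kappa L Pq Pw Pp Pu aa bb gg ab ag bg : R) :
  0 <= s <= 1 -> 0 <= kappa ->
  Pq <= Pw - gg / (2 * L) ->
  Pw - bg + kappa / 2 * bb <= Pu ->
  Pw + s * (bg - ag) + kappa / 2 * (s ^ 2 * (aa - 2 * ab + bb)) <= Pp ->
  0 <= aa - 2 * ab + bb ->
  Pq - Pu + (kappa / 2 * ((1 - s) ^ 2 * aa + 2 * s * (1 - s) * ab + s ^ 2 * bb)
             - s * (1 - s) * ag - s ^ 2 * bg + gg / (2 * L))
  <= (1 - s) * (Pp - Pu + kappa / 2 * aa).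
Proof.
  intros hs hk descent lower_u lower_p hab.
  assert (0 <= s * (Pu - (Pw - bg + kappa / 2 * bb))) by (apply Rmult_le_pos; lra).
  assert (0 <= (1 - s) * (Pp - (Pw + s * (bg - ag) + kappa / 2 * (s ^ 2 * (aa - 2 * ab + bb)))))
    by (apply Rmult_le_pos; lra).
  assert (0 <= kappa / 2 * (s * (1 - s ^ 2)) * (aa - 2 * ab + bb)).
  { apply Rmult_le_pos; [apply Rmult_le_pos; [lra| apply Rmult_le_pos; nra]| lra]. }
  lra.
Qed.

Lemma descent_step m (psi : vec m -> R) L (w gw : vec m) : 0 < L ->
  (forall q, psi q <= psi w + vdot m gw (vsub q w) + L / 2 * vdot m (vsub q w) (vsub q w)) ->
  psi (vsub w (vscal (1 / L) gw)) <= psi w - vdot m gw gw / (2 * L).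
Proof.
  intros hL upper. pose proof (upper (vsub w (vscal (1 / L) gw))) as up.
  replace (vsub (vsub w (vscal (1 / L) gw)) w) with (vscal (- (1 / L)) gw) in up
    by (apply functional_extensionality; intro i; unfold vsub, vscal; ring).
  vexp_in up.
  assert (- (1 / L) * vdot m gw gw + L / 2 * (- (1 / L) * (- (1 / L) * vdot m gw gw))
          = - (vdot m gw gw / (2 * L))) by (field; lra).
  lra.
Qed.

Lemma smooth_gradient_bound m (psi : vec m -> R) L (p gp : vec m) delta : 0 < L ->
  (forall q, psi q <= psi p + vdot m gp (vsub q p) + L / 2 * vdot m (vsub q p) (vsub q p)) ->
  (forall u, psi p - psi u <= delta) -> vdot m gp gp <= 2 * L * delta.
Proof.
  intros hL upper gap. pose proof (descent_step m psi L p gp hL upper) as desc.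
  specialize (gap (vsub p (vscal (1 / L) gp))).
  apply (Rmult_le_reg_r (/ (2 * L))); [apply Rinv_0_lt_compat; lra|].
  replace (2 * L * delta * / (2 * L)) with delta by (field; lra).
  unfold Rdiv in desc. lra.
Qed.

Lemma rate_factor_spec L kappa : 0 < kappa <= L ->
  0 < sqrt (kappa / L) <= 1 /\ kappa = sqrt (kappa / L) ^ 2 * L.
Proof.
  intros [hk hkL].
  assert (hq : 0 < kappa / L) by (apply Rdiv_lt_0_compat; lra).
  assert (hs2 : sqrt (kappa / L) ^ 2 = kappa / L) by (apply pow2_sqrt; lra).
  split; [split|].
  - apply sqrt_lt_R0; lra.
  - rewrite <- sqrt_1. apply sqrt_le_1_alt.
    apply (Rmult_le_reg_r L); [lra|]. field_simplify; lra.
  - rewrite hs2. field. lra.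
Qed.

Section FastGradient.
Variables (m : nat) (psi : vec m -> R) (gr : vec m -> vec m) (L kappa : R).
Hypotheses (kappa_pos : 0 < kappa) (kappa_le_L : kappa <= L).
Hypothesis psi_upper : forall p q,
  psi q <= psi p + vdot m (gr p) (vsub q p) + L / 2 * vdot m (vsub q p) (vsub q p).
Hypothesis psi_lower : forall p q,
  psi p + vdot m (gr p) (vsub q p) + kappa / 2 * vdot m (vsub q p) (vsub q p) <= psi q.

Let s := sqrt (kappa / L).

Lemma fgm_momentum :
  (sqrt L - sqrt kappa) / (sqrt L + sqrt kappa) = (1 - s) / (1 + s).
Proof.
  destruct (rate_factor_spec L kappa (conj kappa_pos kappa_le_L)) as [[hs0 _] _]. fold s in hs0.
  assert (hsk : sqrt kappa = s * sqrt L).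
  { unfold s. rewrite <- sqrt_mult_alt by (left; apply Rdiv_lt_0_compat; lra).
    f_equal. field. lra. }
  assert (0 < sqrt L) by (apply sqrt_lt_R0; lra).
  rewrite hsk. field. split; nra.
Qed.

Let potential (p w u : vec m) : R :=
  psi p - psi u
  + kappa / 2 * vdot m (vsub (fgm_center s p w) u) (vsub (fgm_center s p w) u).

Lemma fgm_step p w u :
  let p' := vsub w (vscal (1 / L) (gr w)) in
  let w' := vadd p' (vscal ((1 - s) / (1 + s)) (vsub p' p)) in
  potential p' w' u <= (1 - s) * potential p w u.
Proof.
  intros p' w'.
  destruct (rate_factor_spec L kappa (conj kappa_pos kappa_le_L)) as [hs hkappa].
  fold s in hs, hkappa.
  set (g := gr w). set (a := vsub (fgm_center s p w) u). set (b := vsub w u).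
  assert (center' : vsub (fgm_center s p' w') u
                    = vadd (vadd (vscal (1 - s) a) (vscal s b)) (vscal (- (1 / (s * L))) g)).
  { apply functional_extensionality; intro i.
    unfold w', p', a, b, g, fgm_center, vsub, vscal, vadd. cbv beta. field. split; lra. }
  pose proof (descent_step m psi L w (gr w) ltac:(lra) (psi_upper w)) as descent.
  fold g p' in descent.
  pose proof (psi_lower w u) as lower_u. fold g in lower_u.
  replace (vsub u w) with (vscal (-1) b) in lower_u
    by (apply functional_extensionality; intro i; unfold b, vsub, vscal; ring).
  pose proof (psi_lower w p) as lower_p. fold g in lower_p.
  replace (vsub p w) with (vscal s (vsub b a)) in lower_p
    by (apply functional_extensionality; intro i; unfold a, b, fgm_center, vsub, vscal;
        field; lra).
  pose proof (vdot_pos m (vsub a b)) as hab.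
  assert (norm' : kappa / 2 * vdot m (vsub (fgm_center s p' w') u) (vsub (fgm_center s p' w') u)
    = kappa / 2 * ((1 - s) ^ 2 * vdot m a a + 2 * s * (1 - s) * vdot m a b + s ^ 2 * vdot m b b)
      - s * (1 - s) * vdot m a g - s ^ 2 * vdot m b g + vdot m g g / (2 * L)).
  { rewrite center'. vexp. rewrite (vdot_sym m b a), (vdot_sym m g a), (vdot_sym m g b).
    rewrite hkappa. field. lra. }
  unfold potential. rewrite norm'. fold a.
  vexp_in lower_u. vexp_in lower_p. vexp_in hab.
  rewrite (vdot_sym m b a), (vdot_sym m g a), (vdot_sym m g b) in *.
  pose proof (fgm_step_scalar s kappa L (psi p') (psi w) (psi p) (psi u) (vdot m a a)
    (vdot m b b) (vdot m g g) (vdot m a b) (vdot m a g) (vdot m b g)) as step.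
  apply step; [lra|lra|exact descent|lra|lra|lra].
Qed.

Lemma fgm_potential_decay u k :
  potential (fst (fgm gr L kappa k)) (snd (fgm gr L kappa k)) u
  <= (1 - s) ^ k * (psi vzero - psi u + kappa / 2 * vdot m u u).
Proof.
  destruct (rate_factor_spec L kappa (conj kappa_pos kappa_le_L)) as [hs _]. fold s in hs.
  induction k as [|k IH].
  - unfold potential. simpl.
    replace (vsub (fgm_center s vzero vzero) u) with (vscal (-1) u)
      by (apply functional_extensionality; intro i;
          unfold fgm_center, vsub, vscal, vzero; field; lra).
    vexp. lra.
  - cbn [fgm]. destruct (fgm gr L kappa k) as [p w]. cbn [fst snd] in *.
    rewrite fgm_momentum.
    eapply Rle_trans; [apply fgm_step|].
    rewrite <- tech_pow_Rmult, Rmult_assoc.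
    apply Rmult_le_compat_l; [lra| exact IH].
Qed.

Lemma fgm_rate u k :
  psi (fst (fgm gr L kappa k)) - psi u
  <= (1 - sqrt (kappa / L)) ^ k * (psi vzero - psi u + kappa / 2 * vdot m u u).
Proof.
  pose proof (fgm_potential_decay u k) as decay. unfold potential in decay.
  pose proof (vdot_pos m (vsub (fgm_center s (fst (fgm gr L kappa k)) (snd (fgm gr L kappa k))) u)).
  assert (0 <= kappa / 2 * vdot m (vsub (fgm_center s (fst (fgm gr L kappa k))
     (snd (fgm gr L kappa k))) u) (vsub (fgm_center s (fst (fgm gr L kappa k))
     (snd (fgm gr L kappa k))) u)) by (apply Rmult_le_pos; lra).
  fold s. lra.
Qed.

End FastGradient.

(** * Tikhonov regularization [psi = Phi + kappa/2 |.|^2] *)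

Lemma regularized_upper m (Phi : vec m -> R) (G : vec m -> vec m) Lp kappa p q :
  Phi q <= Phi p + vdot m (G p) (vsub q p) + Lp / 2 * vdot m (vsub q p) (vsub q p) ->
  Phi q + kappa / 2 * vdot m q q
  <= Phi p + kappa / 2 * vdot m p p + vdot m (vadd (G p) (vscal kappa p)) (vsub q p)
     + (Lp + kappa) / 2 * vdot m (vsub q p) (vsub q p).
Proof. intro upper. rewrite (sq_expand m kappa p q), vdot_addl, vdot_scall. lra. Qed.

Lemma regularized_lower m (Phi : vec m -> R) (G : vec m -> vec m) kappa p q :
  Phi p + vdot m (G p) (vsub q p) <= Phi q ->
  Phi p + kappa / 2 * vdot m p p + vdot m (vadd (G p) (vscal kappa p)) (vsub q p)
  + kappa / 2 * vdot m (vsub q p) (vsub q p) <= Phi q + kappa / 2 * vdot m q q.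
Proof. intro lower. rewrite (sq_expand m kappa p q), vdot_addl, vdot_scall. lra. Qed.

Lemma regularized_residual_bound m (Phi : vec m -> R) (G : vec m -> vec m)
  kappa L delta c (p pstar : vec m) : 0 < L -> 0 <= kappa ->
  (forall q, Phi q + kappa / 2 * vdot m q q
     <= Phi p + kappa / 2 * vdot m p p + vdot m (vadd (G p) (vscal kappa p)) (vsub q p)
        + L / 2 * vdot m (vsub q p) (vsub q p)) ->
  (forall u, Phi p + kappa / 2 * vdot m p p - (Phi u + kappa / 2 * vdot m u u) <= delta) ->
  Phi pstar - Phi p + kappa / 2 * vdot m pstar pstar <= c ->
  vnorm (G p) <= sqrt (2 * L * delta) + kappa * vnorm p
  /\ kappa / 2 * vnorm p ^ 2 <= delta + c.
Proof.
  intros hL hk upper gap hc.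
  set (gpsi := vadd (G p) (vscal kappa p)).
  pose proof (smooth_gradient_bound m (fun q => Phi q + kappa / 2 * vdot m q q) L p gpsi delta
    hL upper gap) as grad_small.
  split.
  - replace (G p) with (vadd gpsi (vscal (- kappa) p))
      by (apply functional_extensionality; intro i; unfold gpsi, vadd, vscal; ring).
    eapply Rle_trans; [apply vnorm_triangle|].
    rewrite vnorm_scal, Rabs_Ropp, Rabs_right by lra.
    apply Rplus_le_compat_r. apply sqrt_le_1_alt. exact grad_small.
  - specialize (gap pstar). rewrite vnorm2. lra.
Qed.


(** * The smoothed dual function [theta_rho] *)

(** Real value of a finite extended real ([+oo] is sent to [0]). *)
Definition ext_val (e : ext) : R := match e with Some v => v | None => 0 end.

Lemma esup_lub (E : R -> Prop) l : is_lub E l -> esup E = Some l.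
Proof.
  intro hl. unfold esup.
  destruct (excluded_middle_informative (exists l, is_lub E l)) as [ex|nex].
  - f_equal. destruct (constructive_indefinite_description _ ex) as [l' hl'].
    simpl. eapply is_lub_u; eauto.
  - exfalso. apply nex. eauto.
Qed.

Section SmoothedDual.
Variables (H : InnerSpace) (m : nat) (f : H -> ext) (g : vec m -> ext)
  (A : H -> vec m) (Astar : vec m -> H) (rho : R)
  (xf : vec m -> H) (xg : vec m -> vec m).
Hypothesis A_adj : forall p x, hinner (Astar p) x = vdot m p (A x).
Hypothesis rho_pos : 0 < rho.
Hypothesis H_xf : forall p, is_xf f Astar rho p (xf p).
Hypothesis H_xg : forall p, is_xg g p (xg p).

Definition fconj_smooth (p : vec m) : R :=
  vdot m p (A (xf p)) - ext_val (f (xf p)) - rho / 2 * hinner (xf p) (xf p).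

Definition gconj_opp (p : vec m) : R := - vdot m p (xg p) - ext_val (g (xg p)).

Definition theta_smooth (p : vec m) : R := fconj_smooth p + gconj_opp p.
Definition dual_residual (p : vec m) : vec m := vsub (A (xf p)) (xg p).

Lemma xf_spec p : f (xf p) = Some (ext_val (f (xf p))) /\
  forall x v, f x = Some v -> vdot m p (A x) - v - rho / 2 * hinner x x <= fconj_smooth p.
Proof.
  destruct (H_xf p) as [v0 [hv0 hmax]]. unfold fconj_smooth. rewrite hv0.
  split; [reflexivity|]. intros x v hx. specialize (hmax x v hx).
  rewrite !A_adj, !hnorm2 in hmax. exact hmax.
Qed.

Lemma xg_spec p : g (xg p) = Some (ext_val (g (xg p))) /\
  forall x v, g x = Some v -> vdot m p (xg p) + ext_val (g (xg p)) <= vdot m p x + v.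
Proof. destruct (H_xg p) as [v0 [hv0 hmin]]. rewrite hv0. split; [reflexivity| exact hmin]. Qed.

(** [theta_rho] is convex with (sub)gradient [dual_residual]: it is a sum of
    suprema of affine functions of [p]. *)
Lemma theta_smooth_lower p q :
  theta_smooth p + vdot m (dual_residual p) (vsub q p) <= theta_smooth q.
Proof.
  destruct (xf_spec q) as [_ fq]. destruct (xf_spec p) as [fp _].
  destruct (xg_spec q) as [_ gq]. destruct (xg_spec p) as [gp _].
  specialize (fq _ _ fp). specialize (gq _ _ gp).
  unfold theta_smooth, fconj_smooth, gconj_opp, dual_residual in *.
  vexp. rewrite (vdot_sym m (A (xf p)) q), (vdot_sym m (A (xf p)) p),
    (vdot_sym m (xg p) q), (vdot_sym m (xg p) p).
  lra.
Qed.

Definition theta_reg (kappa : R) (p : vec m) : R := theta_smooth p + kappa / 2 * vdot m p p.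

Lemma theta_reg_lower kappa p q :
  theta_reg kappa p + vdot m (vadd (dual_residual p) (vscal kappa p)) (vsub q p)
  + kappa / 2 * vdot m (vsub q p) (vsub q p) <= theta_reg kappa q.
Proof.
  exact (regularized_lower m theta_smooth dual_residual kappa p q (theta_smooth_lower p q)).
Qed.

Variables (mu nA : R).
Hypotheses (f_convex : convex (@hcomb H) f) (mu_pos : 0 < mu) (g_sc : strongly_convex mu g)
  (A_lin : linear_map A) (H_nA : is_opnorm A nA).

(** [theta_rho] is smooth with constant [||A||^2/rho + 1/mu]: the maximizers
    [x_{f,p}] and minimizers [x_{g,p}] are stable by quadratic growth. *)
Lemma theta_smooth_upper p q :
  theta_smooth q <= theta_smooth p + vdot m (dual_residual p) (vsub q p)
                    + (nA ^ 2 / rho + 1 / mu) / 2 * vdot m (vsub q p) (vsub q p).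
Proof.
  set (d := vsub q p).
  destruct (H_xf p) as [vp [fp fp_max]].
  assert (fp_val : ext_val (f (xf p)) = vp) by (rewrite fp; reflexivity).
  destruct (xf_spec q) as [fq _].
  pose proof (smoothed_maximizer_growth H f f_convex (Astar p) rho rho_pos (xf p) vp fp fp_max
    _ _ fq) as growth_f.
  rewrite !A_adj in growth_f.
  destruct (xg_spec p) as [gp gp_min]. destruct (xg_spec q) as [gq _].
  pose proof (strongly_convex_minimizer_growth m g mu mu_pos g_sc p _ _ gp gp_min _ _ gq)
    as growth_g.
  pose proof (coupling_bound H m A A_lin nA rho H_nA rho_pos d (hsub (xf q) (xf p))) as coupling.
  rewrite (linear_sub H m A A_lin), vdot_subr in coupling.
  pose proof (young m d (vsub (xg p) (xg q)) (1 / mu) ltac:(apply Rdiv_lt_0_compat; lra))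
    as young_g.
  replace (1 / (2 * (1 / mu))) with (mu / 2) in young_g by (field; lra).
  rewrite vdot_subr in young_g.
  replace (vdot m (vsub (xg p) (xg q)) (vsub (xg p) (xg q)))
    with (vdot m (vsub (xg q) (xg p)) (vsub (xg q) (xg p))) in young_g
    by (vexp; rewrite (vdot_sym m (xg q) (xg p)); ring).
  assert (shift_f : vdot m q (A (xf q)) = vdot m p (A (xf q)) + vdot m d (A (xf q)))
    by (unfold d; vexp; ring).
  assert (shift_g : vdot m q (xg q) = vdot m p (xg q) + vdot m d (xg q))
    by (unfold d; vexp; ring).
  assert (split_L : (nA ^ 2 / rho + 1 / mu) / 2 * vdot m d d
    = nA ^ 2 / (2 * rho) * vdot m d d + 1 / mu / 2 * vdot m d d) by (field; lra).
  unfold theta_smooth, fconj_smooth, gconj_opp, dual_residual. fold d.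
  rewrite shift_f, shift_g, split_L, fp_val, vdot_subl,
    (vdot_sym m (A (xf p)) d), (vdot_sym m (xg p) d).
  lra.
Qed.

Lemma theta_reg_upper kappa p q :
  theta_reg kappa q
  <= theta_reg kappa p + vdot m (vadd (dual_residual p) (vscal kappa p)) (vsub q p)
     + (nA ^ 2 / rho + 1 / mu + kappa) / 2 * vdot m (vsub q p) (vsub q p).
Proof.
  exact (regularized_upper m theta_smooth dual_residual _ kappa p q (theta_smooth_upper p q)).
Qed.

Variables (Df : R).
Hypothesis H_Df : is_Df f Df.

Lemma conjH_smooth_bounds p : exists l,
  conjH f (Astar p) = Some l /\ fconj_smooth p <= l <= fconj_smooth p + rho * Df.
Proof.
  set (E := fun r => exists x v, f x = Some v /\ r = hinner (Astar p) x - v).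
  assert (bound : forall r, E r -> r <= fconj_smooth p + rho * Df).
  { intros r [x [v [hx ->]]]. destruct (xf_spec p) as [_ hmax]. specialize (hmax x v hx).
    destruct H_Df as [ub _].
    assert (hD : / 2 * hnorm x ^ 2 <= Df) by (apply ub; exists x; split; [congruence| reflexivity]).
    rewrite hnorm2 in hD. rewrite A_adj.
    assert (rho / 2 * hinner x x <= rho * Df).
    { replace (rho / 2 * hinner x x) with (rho * (/ 2 * hinner x x)) by field.
      apply Rmult_le_compat_l; lra. }
    lra. }
  assert (attained : E (fconj_smooth p + rho / 2 * hinner (xf p) (xf p))).
  { exists (xf p), (ext_val (f (xf p))). split; [apply xf_spec|].
    unfold fconj_smooth. rewrite A_adj. ring. }
  destruct (completeness E) as [l hl]; [exists (fconj_smooth p + rho * Df); exact bound| eauto|].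
  exists l. split; [exact (esup_lub E l hl)|]. split.
  - pose proof (hinner_pos H (xf p)).
    assert (0 <= rho / 2 * hinner (xf p) (xf p)) by (apply Rmult_le_pos; lra).
    pose proof (proj1 hl _ attained). lra.
  - apply (proj2 hl). exact bound.
Qed.

Lemma conjV_opp p : conjV g (vopp p) = Some (gconj_opp p).
Proof.
  apply esup_lub. destruct (xg_spec p) as [gp gp_min]. split.
  - intros r [x [v [hx ->]]]. specialize (gp_min x v hx).
    rewrite vdot_oppl. unfold gconj_opp. lra.
  - intros b hb. apply hb. exists (xg p), (ext_val (g (xg p))).
    split; [exact gp|]. rewrite vdot_oppl. unfold gconj_opp. ring.
Qed.

Lemma theta_smooth_sandwich p : exists t,
  theta f g Astar p = Some t /\ theta_smooth p <= t <= theta_smooth p + rho * Df.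
Proof.
  destruct (conjH_smooth_bounds p) as [l [hl bounds]].
  exists (l + gconj_opp p). unfold theta. rewrite hl, conjV_opp. simpl.
  split; [reflexivity|]. unfold theta_smooth. lra.
Qed.

Lemma theta_smooth_ge_optimum pstar ts :
  (forall p, ext_le (theta f g Astar pstar) (theta f g Astar p)) ->
  theta f g Astar pstar = Some ts -> forall p, ts - rho * Df <= theta_smooth p.
Proof.
  intros opt hts p. destruct (theta_smooth_sandwich p) as [t [ht [_ upper]]].
  specialize (opt p). rewrite hts, ht in opt. simpl in opt. lra.
Qed.

End SmoothedDual.

Lemma exp_INR_mul n x : exp (INR n * x) = exp x ^ n.
Proof.
  induction n as [|n IH]; [simpl; rewrite Rmult_0_l; apply exp_0|].
  rewrite S_INR, Rmult_plus_distr_r, Rmult_1_l, exp_plus, IH. simpl. ring.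
Qed.

Lemma sqrt_add_le a b : 0 <= a -> 0 <= b -> sqrt (a + b) <= sqrt a + sqrt b.
Proof.
  intros ha hb. pose proof (sqrt_pos a); pose proof (sqrt_pos b).
  apply Rsqr_incr_0_var; [|lra]. unfold Rsqr. rewrite sqrt_sqrt by lra.
  replace ((sqrt a + sqrt b) * (sqrt a + sqrt b))
    with (sqrt a * sqrt a + sqrt b * sqrt b + 2 * sqrt a * sqrt b) by ring.
  rewrite !sqrt_sqrt by lra. nra.
Qed.

Lemma sqrt_le_of X Y : 0 <= Y -> X <= Y ^ 2 -> sqrt X <= Y.
Proof. intros hY hX. rewrite <- (sqrt_pow2 Y hY). apply sqrt_le_1_alt. exact hX. Qed.

Lemma one_step_poly_bound s : 0 <= s <= 1 -> (1 + s) ^ 2 * (1 - s) <= 2 * (1 - s / 4) ^ 4.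
Proof.
  intros. assert (0 <= s * (s - 3 / 5) ^ 2) by (apply Rmult_le_pos; [lra| apply pow2_ge_0]).
  assert (0 <= (s - 592 / 1000) ^ 2) by apply pow2_ge_0.
  assert (0 <= s ^ 4) by (apply pow_le; lra). nra.
Qed.

Lemma geometric_exp_bound s k : 0 < s <= 1 -> (1 <= k)%nat ->
  (1 + s) ^ 2 * (1 - s) ^ k <= 2 * exp (- INR k * s).
Proof.
  intros hs hk. destruct k as [|j]; [lia|].
  replace (- INR (S j) * s) with (INR (S j) * (- s)) by ring. rewrite exp_INR_mul.
  simpl pow at 2 3.
  assert (1 - s <= exp (- s)) by (pose proof (exp_ineq1_le (- s)); lra).
  assert (hj : (1 - s) ^ j <= exp (- s) ^ j) by (apply pow_incr; lra).
  assert ((1 - s / 4) ^ 4 <= exp (- s)).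
  { replace (- s) with (INR 4 * (- s / 4)) by (simpl; field). rewrite exp_INR_mul.
    apply pow_incr. pose proof (exp_ineq1_le (- s / 4)). lra. }
  pose proof (one_step_poly_bound s ltac:(lra)).
  assert (hq : (1 + s) ^ 2 * (1 - s) <= 2 * exp (- s)) by lra.
  assert (h0 : 0 <= (1 + s) ^ 2 * (1 - s)) by (apply Rmult_le_pos; [apply pow2_ge_0|lra]).
  assert (hp : 0 <= (1 - s) ^ j) by (apply pow_le; lra).
  pose proof (Rmult_le_compat _ _ _ _ h0 hp hq hj) as prod.
  rewrite <- !Rmult_assoc. exact prod.
Qed.

Lemma accelerated_rate_bound L s D k : 0 < L -> 0 < s <= 1 -> 0 <= D -> (1 <= k)%nat ->
  (1 + s) * sqrt (2 * L * ((1 - s) ^ k * D)) <= 2 * sqrt (L * D) * exp (- (INR k / 2) * s).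
Proof.
  intros hL hs hD hk. set (e := (1 - s) ^ k).
  assert (0 <= e) by (apply pow_le; lra).
  set (E := exp (- (INR k / 2) * s)).
  assert (hE : E * E = exp (- INR k * s)) by (unfold E; rewrite <- exp_plus; f_equal; field).
  assert (0 < E) by apply exp_pos.
  pose proof (sqrt_pos (L * D)). pose proof (sqrt_pos (2 * L * (e * D))).
  apply Rsqr_incr_0_var; [|apply Rmult_le_pos; lra]. unfold Rsqr.
  replace ((1 + s) * sqrt (2 * L * (e * D)) * ((1 + s) * sqrt (2 * L * (e * D))))
    with ((1 + s) ^ 2 * (sqrt (2 * L * (e * D)) * sqrt (2 * L * (e * D)))) by ring.
  replace (2 * sqrt (L * D) * E * (2 * sqrt (L * D) * E))
    with (4 * (sqrt (L * D) * sqrt (L * D)) * (E * E)) by ring.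
  rewrite !sqrt_sqrt by (repeat apply Rmult_le_pos; lra). rewrite hE.
  pose proof (geometric_exp_bound s k hs hk) as decay. fold e in decay.
  assert (0 <= L * D) by (apply Rmult_le_pos; lra).
  replace ((1 + s) ^ 2 * (2 * L * (e * D))) with (2 * (L * D) * ((1 + s) ^ 2 * e)) by ring.
  replace (4 * (L * D) * exp (- INR k * s)) with (2 * (L * D) * (2 * exp (- INR k * s))) by ring.
  apply Rmult_le_compat_l; lra.
Qed.

Lemma residual_rate_arith L kappa Dl c r k : 0 < kappa <= L -> 0 <= Dl -> 0 <= c -> 0 <= r ->
  kappa / 2 * r ^ 2 <= (1 - sqrt (kappa / L)) ^ k * Dl + c -> (k = 0%nat -> r = 0) ->
  sqrt (2 * L * ((1 - sqrt (kappa / L)) ^ k * Dl)) + kappa * r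
  <= 2 * sqrt (L * Dl) * exp (- (INR k / 2) * sqrt (kappa / L)) + sqrt (2 * kappa * c).
Proof.
  intros hkL hDl hc hr hiter hk0.
  destruct (rate_factor_spec L kappa hkL) as [hs hkappa].
  set (s := sqrt (kappa / L)) in *. set (e := (1 - s) ^ k) in *.
  assert (he : 0 <= e) by (apply pow_le; lra).
  pose proof (sqrt_pos (2 * kappa * c)).
  destruct k as [|k'].
  - rewrite (hk0 eq_refl), Rmult_0_r, Rplus_0_r.
    unfold e. simpl.
    replace (- (0 / 2) * s) with 0 by field. rewrite exp_0.
    replace (2 * L * (1 * Dl)) with (2 * (L * Dl)) by ring.
    rewrite sqrt_mult_alt by lra.
    assert (sqrt 2 <= 2) by (apply sqrt_le_of; lra).
    pose proof (sqrt_pos (L * Dl)). nra.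
  - assert (hkr : kappa * r <= s * sqrt (2 * L * (e * Dl)) + sqrt (2 * kappa * c)).
    { replace (kappa * r) with (sqrt (2 * kappa * (kappa / 2 * r ^ 2)))
        by (rewrite <- (sqrt_pow2 (kappa * r)) by nra; f_equal; field).
      eapply Rle_trans; [apply sqrt_le_1_alt, (Rmult_le_compat_l (2 * kappa)); [lra| exact hiter]|].
      rewrite Rmult_plus_distr_l.
      eapply Rle_trans; [apply sqrt_add_le; apply Rmult_le_pos; try apply Rmult_le_pos; lra|].
      apply Rplus_le_compat_r. right.
      rewrite <- (sqrt_pow2 s) at 1 by lra. rewrite <- sqrt_mult_alt by nra.
      f_equal. rewrite hkappa at 1. ring. }
    pose proof (accelerated_rate_bound L s Dl (S k') ltac:(nra) hs hDl ltac:(lia)) as rate.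
    fold e in rate. lra.
Qed.

(** With [kappa = 2 eps / (3 R^2)], the regularization error [sqrt (4 kappa eps / 3)]
    equals [2 sqrt 2 eps / (3 R)], within the announced [4 sqrt 2 eps / (3 R)]. *)
Lemma regularization_error eps Rb : 0 < eps -> 0 < Rb ->
  sqrt (2 * kappa_of eps Rb * (2 * eps / 3)) <= 4 * sqrt 2 * eps / (3 * Rb).
Proof.
  intros heps hRb. unfold kappa_of.
  assert (0 < sqrt 2) by (apply sqrt_lt_R0; lra).
  apply sqrt_le_of; [apply Rlt_le, Rdiv_lt_0_compat; nra|].
  replace ((4 * sqrt 2 * eps / (3 * Rb)) ^ 2) with (16 * sqrt 2 ^ 2 * eps ^ 2 / (9 * Rb ^ 2))
    by (field; lra).
  rewrite pow2_sqrt by lra.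
  replace (2 * (2 * eps / (3 * Rb ^ 2)) * (2 * eps / 3)) with (8 * eps ^ 2 / (9 * Rb ^ 2))
    by (field; lra).
  apply Rmult_le_compat_r; [left; apply Rinv_0_lt_compat; nra|].
  pose proof (pow2_ge_0 eps). lra.
Qed.

Lemma parameter_choice eps Df Rb nA mu : 0 < eps -> 0 < Df -> 0 < Rb -> 0 < mu ->
  0 < rho_of eps Df /\ rho_of eps Df * Df = eps / 3 /\
  0 < kappa_of eps Rb <= Lconst nA (rho_of eps Df) mu (kappa_of eps Rb) /\
  kappa_of eps Rb / 2 * Rb ^ 2 = eps / 3.
Proof.
  intros heps hDf hRb hmu. unfold rho_of, kappa_of, Lconst.
  assert (hrho : 0 < eps / (3 * Df)) by (apply Rdiv_lt_0_compat; lra).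
  assert (0 < Rb ^ 2) by (apply pow_lt; lra).
  assert (0 <= nA ^ 2 / (eps / (3 * Df)))
    by (apply Rmult_le_pos; [apply pow2_ge_0| left; apply Rinv_0_lt_compat; lra]).
  assert (0 < 1 / mu) by (apply Rdiv_lt_0_compat; lra).
  assert (0 < 2 * eps / (3 * Rb ^ 2)) by (apply Rdiv_lt_0_compat; lra).
  repeat split; try lra; field; lra.
Qed.

Theorem mainTheorem5
  (H : InnerSpace) (Hcomplete : complete H) (m : nat)
  (f : H -> ext) (g : vec m -> ext) (mu : R)
  (A : H -> vec m) (Astar : vec m -> H)
  (f_proper : proper f) (f_convex : convex (@hcomb H) f)
  (f_lsc : lsc (@hdist H) f) (f_bdd : bounded_dom f)
  (g_proper : proper g) (g_lsc : lsc (@vdist m) g)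
  (mu_pos : 0 < mu) (g_sc : strongly_convex mu g)
  (A_lin : linear_map A) (A_cont : bounded_map A)
  (A_adj : forall p x, hinner (Astar p) x = vdot m p (A x))
  (dom_inter : exists x, dom f x /\ dom g (A x))
  (nA : R) (H_nA : is_opnorm A nA)
  (Df : R) (H_Df : is_Df f Df) (Df_pos : 0 < Df)
  (Rb : R) (Rb_pos : 0 < Rb) (pstar : vec m)
  (pstar_opt : forall p, ext_le (theta f g Astar pstar) (theta f g Astar p))
  (pstar_bd : vnorm pstar <= Rb)
  (eps : R) (eps_pos : 0 < eps)
  (xf : vec m -> H) (H_xf : forall p, is_xf f Astar (rho_of eps Df) p (xf p))
  (xg : vec m -> vec m) (H_xg : forall p, is_xg g p (xg p)) :
  let rho := rho_of eps Df in
  let kappa := kappa_of eps Rb in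
  let L := Lconst nA rho mu kappa in
  let grad := fun w => vadd (vsub (A (xf w)) (xg w)) (vscal kappa w) in
  exists t0 tstar,
    theta f g Astar vzero = Some t0 /\ theta f g Astar pstar = Some tstar /\
    forall k : nat,
      let pk := fst (fgm grad L kappa k) in
      vnorm (vsub (A (xf pk)) (xg pk))
      <= 2 * sqrt (L * (t0 - tstar + eps / 3)) * exp (- (INR k / 2) * sqrt (kappa / L))
         + 4 * sqrt 2 * eps / (3 * Rb).
Proof.
  intros rho kappa L grad.
  destruct (parameter_choice eps Df Rb nA mu eps_pos Df_pos Rb_pos mu_pos)
    as (rho_pos & rho_Df & [kappa_pos kappa_le_L] & kappa_Rb).
  fold rho kappa in rho_pos, rho_Df, kappa_pos, kappa_le_L, kappa_Rb. fold L in kappa_le_L.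
  set (Phi := theta_smooth H m f g A rho xf xg).
  set (psi := theta_reg H m f g A rho xf xg kappa).
  pose proof (theta_reg_upper H m f g A Astar rho xf xg A_adj rho_pos H_xf H_xg mu nA
    f_convex mu_pos g_sc A_lin H_nA kappa) as psi_upper.
  pose proof (theta_reg_lower H m f g A Astar rho xf xg A_adj H_xf H_xg kappa) as psi_lower.
  destruct (theta_smooth_sandwich H m f g A Astar rho xf xg A_adj rho_pos H_xf H_xg Df H_Df vzero)
    as [t0 [ht0 [t0_lower _]]].
  destruct (theta_smooth_sandwich H m f g A Astar rho xf xg A_adj rho_pos H_xf H_xg Df H_Df pstar)
    as [ts [hts [ts_lower _]]].
  pose proof (theta_smooth_ge_optimum H m f g A Astar rho xf xg A_adj rho_pos H_xf H_xg Df H_Df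
    pstar ts pstar_opt hts) as Phi_ge.
  exists t0, ts. split; [exact ht0|]. split; [exact hts|]. intros k pk.
  fold Phi in t0_lower, ts_lower, Phi_ge. rewrite rho_Df in Phi_ge.
  destruct (rate_factor_spec L kappa (conj kappa_pos kappa_le_L)) as [rate_factor _].
  assert (gap : forall u, psi pk - psi u <= (1 - sqrt (kappa / L)) ^ k * (t0 - ts + eps / 3)).
  { intro u. eapply Rle_trans;
      [exact (fgm_rate m psi grad L kappa kappa_pos kappa_le_L psi_upper psi_lower u k)|].
    apply Rmult_le_compat_l; [apply pow_le; lra|].
    specialize (Phi_ge u). unfold psi, theta_reg. fold Phi. rewrite vdot_zerol. lra. }
  assert (pstar_term : kappa / 2 * vdot m pstar pstar <= eps / 3).
  { rewrite <- kappa_Rb, <- vnorm2. apply Rmult_le_compat_l; [lra|].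
    apply pow_incr. split; [apply vnorm_pos| exact pstar_bd]. }
  destruct (regularized_residual_bound m Phi (dual_residual H m A xf xg) kappa L _ (2 * eps / 3)
    pk pstar ltac:(lra) ltac:(lra) (psi_upper pk) gap ltac:(specialize (Phi_ge pk); lra))
    as [residual iterate].
  eapply Rle_trans; [exact residual|].
  eapply Rle_trans; [apply (residual_rate_arith _ _ _ (2 * eps / 3))|].
  - exact (conj kappa_pos kappa_le_L).
  - specialize (Phi_ge vzero). lra.
  - lra.
  - apply vnorm_pos.
  - exact iterate.
  - intros ->. apply vnorm_zero.
  - apply Rplus_le_compat_l, regularization_error; assumption.
Qed.
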